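(* Let $\mathbf{A}\in\mathbb{R}^{n\times n}$ and $\mathbf{C}_i\in\mathbb{R}^{r_i\times n}$ for $i=1,\dots,N$, and suppose the pair $(\mathbf{A},\mathbf{C})$ is observable, where $\mathbf{C}=[\mathbf{C}_1^T\ \cdots\ \mathbf{C}_N^T]^T$. Let the sequence of directed graphs $\{\mathcal{G}[k]\}_{k\ge 0}$ satisfy the joint strong-connectivity assumption with parameter $T$. Then for every $\rho\in(0,1)$ there exist observer gains $\mathbf{L}_1,\dots,\mathbf{L}_N$ (with $\mathbf{L}_j$ of compatible size) such that, when every node runs the freshness-index algorithm described in the context, for all initial states $\mathbf{z}[0]$ and all initial estimates $\hat{\mathbf{z}}_i[0]$ there is a constant $c\ge 0$ with $$\|\hat{\mathbf{z}}_i[k]-\mathbf{z}[k]\|\le c\,\rho^k\quad\text{for all } k\ge (2N-1)(N-1)T \text{ and all } i\in\mathcal{V}.$$ Consequently the state estimates $\hat{\mathbf{x}}_i[k]:=\mathbf{T}\hat{\mathbf{z}}_i[k]$ satisfy $\|\hat{\mathbf{x}}_i[k]-\mathbf{x}[k]\|\le \|\mathbf{T}\|\,c\,\rho^k$ for the same range of $k$, i.e. every node's estimation error converges to zero exponentially fast at rate $\rho$.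
   Context: Graphs. Nodes $\mathcal{V}=\{1,\dots,N\}$. At each time $k\in\mathbb{N}=\{0,1,2,\dots\}$ there is a directed graph $\mathcal{G}[k]=(\mathcal{V},\mathcal{E}[k])$; $(i,j)\in\mathcal{E}[k]$ means node $i$ can send information to node $j$ at time $k$. $\mathcal{N}_i[k]=\{l\neq i:(l,i)\in\mathcal{E}[k]\}$ is the set of neighbors of $i$ at time $k$. The union graph over an interval of times has vertex set $\mathcal{V}$ and edge set the union of the edge sets over that interval. Joint strong-connectivity assumption: there is $T\in\mathbb{N}_+=\{1,2,\dots\}$ such that for every $k\in\mathbb{N}$ the union graph over $[kT,(k+1)T)$ is strongly connected. System. $\mathbf{x}[k+1]=\mathbf{A}\mathbf{x}[k]$, $\mathbf{y}_i[k]=\mathbf{C}_i\mathbf{x}[k]$. Since $(\mathbf{A},\mathbf{C})$ is observable, there is an invertible $\mathbf{T}$ (fixed throughout) such that with $\mathbf{x}[k]=\mathbf{T}\mathbf{z}[k]$ one has $\mathbf{z}[k+1]=\bar{\mathbf{A}}\mathbf{z}[k]$, $\mathbf{y}_i[k]=\mathbf{C}_i\mathbf{T}\mathbf{z}[k]$, where $\mathbf{z}=[\mathbf{z}^{(1)T}\cdots\mathbf{z}^{(N)T}]^T$ with $\mathbf{z}^{(j)}\in\mathbb{R}^{n_j}$ (''substate $j$''), $\sum_j n_j=n$, $\bar{\mathbf{A}}=\mathbf{T}^{-1}\mathbf{A}\mathbf{T}$ is block lower triangular with blocks $\mathbf{A}_{jq}$ ($\mathbf{A}_{jq}=0$ for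 $q>j$), so $\mathbf{z}^{(j)}[k+1]=\mathbf{A}_{jj}\mathbf{z}^{(j)}[k]+\sum_{q=1}^{j-1}\mathbf{A}_{jq}\mathbf{z}^{(q)}[k]$; and $\mathbf{C}_i\mathbf{T}=[\mathbf{C}_{i1}\ \cdots\ \mathbf{C}_{ii}\ 0\ \cdots\ 0]$, so $\mathbf{y}_i[k]=\sum_{q=1}^{i}\mathbf{C}_{iq}\mathbf{z}^{(q)}[k]$; moreover each pair $(\mathbf{A}_{jj},\mathbf{C}_{jj})$ is observable. Node $j$ is called the source node of substate $j$. Freshness indices. For each substate $j$ and node $i$, node $i$ keeps $\tau^{(j)}_i[k]\in\{\omega\}\cup\mathbb{N}$, where $\omega$ is a special symbol. Initialization: $\tau^{(j)}_j[0]=0$, $\tau^{(j)}_i[0]=\omega$ for $i\neq j$. The source keeps $\tau^{(j)}_j[k]=0$ for all $k$. For $i\neq j$, let $\mathcal{M}^{(j)}_i[k]=\{l\in\mathcal{N}_i[k]:\tau^{(j)}_l[k]\neq\omega\}$. Case 1, $\tau^{(j)}_i[k]=\omega$: if $\mathcal{M}^{(j)}_i[k]\neq\emptyset$, let $u$ be any minimizer of $\tau^{(j)}_l[k]$ over $l\in\mathcal{M}^{(j)}_i[k]$, set $\tau^{(j)}_i[k+1]=\tau^{(j)}_u[k]+1$ and perform an ''adopt-$u$'' estimate update; otherwise set $\tau^{(j)}_i[k+1]=\omega$ and perform an ''open-loop'' estimate update. Case 2, $\tau^{(j)}_i[k]\neq\omega$: let $\mathcal{F}^{(j)}_i[k]=\{l\in\mathcal{M}^{(j)}_i[k]:\tau^{(j)}_l[k]<\tau^{(j)}_i[k]\}$;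 if nonempty, let $u$ be any minimizer of $\tau^{(j)}_l[k]$ over $\mathcal{F}^{(j)}_i[k]$, set $\tau^{(j)}_i[k+1]=\tau^{(j)}_u[k]+1$ and perform an adopt-$u$ update; otherwise set $\tau^{(j)}_i[k+1]=\tau^{(j)}_i[k]+1$ and perform an open-loop update. Estimates. Each node $i$ keeps $\hat{\mathbf{z}}_i[k]=[\hat{\mathbf{z}}^{(1)T}_i[k]\cdots\hat{\mathbf{z}}^{(N)T}_i[k]]^T$, with arbitrary initial value. Source update for substate $j$: $\hat{\mathbf{z}}^{(j)}_j[k+1]=(\mathbf{A}_{jj}-\mathbf{L}_j\mathbf{C}_{jj})\hat{\mathbf{z}}^{(j)}_j[k]+\sum_{q=1}^{j-1}(\mathbf{A}_{jq}-\mathbf{L}_j\mathbf{C}_{jq})\hat{\mathbf{z}}^{(q)}_j[k]+\mathbf{L}_j\mathbf{y}_j[k]$. Adopt-$u$ update at node $i\ne j$: $\hat{\mathbf{z}}^{(j)}_i[k+1]=\mathbf{A}_{jj}\hat{\mathbf{z}}^{(j)}_u[k]+\sum_{q=1}^{j-1}\mathbf{A}_{jq}\hat{\mathbf{z}}^{(q)}_i[k]$. Open-loop update at node $i\neq j$: $\hat{\mathbf{z}}^{(j)}_i[k+1]=\mathbf{A}_{jj}\hat{\mathbf{z}}^{(j)}_i[k]+\sum_{q=1}^{j-1}\mathbf{A}_{jq}\hat{\mathbf{z}}^{(q)}_i[k]$. These updates are carried out for every substate $j$ at every time $k$. *)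

From HB Require Import structures.
From mathcomp Require Import all_boot all_order all_algebra.
Set Implicit Arguments. Unset Strict Implicit. Unset Printing Implicit Defensive.
Import Order.TTheory GRing.Theory Num.Theory.
Local Open Scope ring_scope.

Definition obsmx (R : pzRingType) (m p : nat) (A : 'M[R]_m) (C : 'M[R]_(p, m))
  : 'M[R]_(\sum_(k < m) p, m) := \mxcol_(k < m) (C *m A ^+ k).

Definition observable (R : fieldType) (m p : nat) (A : 'M[R]_m) (C : 'M[R]_(p, m)) :=
  \rank (obsmx A C) = m.

Definition vnorm (R : realDomainType) (m : nat) (v : 'cV[R]_m) : R :=
  \big[Num.max/0]_(i < m) `|v i 0|.
Definition mnorm (R : realDomainType) (m : nat) (M : 'M[R]_m) : R :=
  \big[Num.max/0]_(i < m) \sum_(j < m) `|M i j|.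

(* E k : rel 'I_N ; E k a b means a can send information to b at time k *)
Definition union_graph (N : nat) (E : nat -> rel 'I_N) (s len : nat) : rel 'I_N :=
  fun a b => [exists t : 'I_len, E (s + t)%N a b].

Definition strongly_connected (N : nat) (e : rel 'I_N) : Prop :=
  forall a b : 'I_N, connect e a b.

Definition joint_strong_connectivity (N : nat) (E : nat -> rel 'I_N) (Tp : nat) : Prop :=
  (0 < Tp)%N /\
  forall k : nat, strongly_connected (union_graph E (k * Tp) Tp).

Definition neighbor (N : nat) (E : nat -> rel 'I_N) (k : nat) (i l : 'I_N) : bool :=
  (l != i) && E k l i.

(* tau k i j : freshness index of node i for substate j at time k; None = omega *)
(* zh k i : estimate of node i at time k (full transformed state, blocks nj) *)
Section Algo.
Variables (R : realFieldType) (N : nat) (nj : 'I_N -> nat) (r : 'I_N -> nat).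
Local Notation n := (\sum_(j < N) nj j)%N.
Variables (Abar : 'M[R]_n) (C : forall i : 'I_N, 'M[R]_(r i, n)) (T : 'M[R]_n).
Variables (L : forall j : 'I_N, 'M[R]_(nj j, r j)).
Variables (E : nat -> rel 'I_N) (y : forall i : 'I_N, nat -> 'cV[R]_(r i)).

Definition Ablk (j q : 'I_N) : 'M[R]_(nj j, nj q) := @submxblock R N N nj nj Abar j q.
Definition Cblk (i q : 'I_N) : 'M[R]_(r i, nj q) := @submxrow R N nj (r i) (C i *m T) q.
Definition sub (v : 'cV[R]_n) (j : 'I_N) : 'cV[R]_(nj j) := @submxcol R N nj 1%N v j.

Variables (tau : nat -> 'I_N -> 'I_N -> option nat) (zh : nat -> 'I_N -> 'cV[R]_n).

Definition coupling (k : nat) (i j : 'I_N) : 'cV[R]_(nj j) :=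
  \sum_(q < N | (q < j)%N) Ablk j q *m sub (zh k i) q.

Definition adopt_update (k : nat) (i j u : 'I_N) : Prop :=
  sub (zh k.+1 i) j = Ablk j j *m sub (zh k u) j + coupling k i j.

Definition openloop_update (k : nat) (i j : 'I_N) : Prop :=
  sub (zh k.+1 i) j = Ablk j j *m sub (zh k i) j + coupling k i j.

Definition source_update (k : nat) (j : 'I_N) : Prop :=
  sub (zh k.+1 j) j =
    (Ablk j j - L j *m Cblk j j) *m sub (zh k j) j
    + \sum_(q < N | (q < j)%N) (Ablk j q - L j *m Cblk j q) *m sub (zh k j) q
    + L j *m y j k.

Definition hasidx (k : nat) (l j : 'I_N) (t : nat) : Prop := tau k l j = Some t.

Definition nonsource_step (k : nat) (i j : 'I_N) : Prop :=
  match tau k i j with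
  | None =>
      (exists l tl, neighbor E k i l /\ hasidx k l j tl) /\
        (exists u tu, neighbor E k i u /\ hasidx k u j tu /\
           (forall l tl, neighbor E k i l -> hasidx k l j tl -> (tu <= tl)%N) /\
           tau k.+1 i j = Some tu.+1 /\ adopt_update k i j u)
      \/
      (~ (exists l tl, neighbor E k i l /\ hasidx k l j tl)) /\
        tau k.+1 i j = None /\ openloop_update k i j
  | Some ti =>
      (exists u tu, neighbor E k i u /\ hasidx k u j tu /\ (tu < ti)%N /\
           (forall l tl, neighbor E k i l -> hasidx k l j tl -> (tl < ti)%N ->
              (tu <= tl)%N) /\
           tau k.+1 i j = Some tu.+1 /\ adopt_update k i j u)
      \/
      (~ (exists l tl, neighbor E k i l /\ hasidx k l j tl /\ (tl < ti)%N)) /\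
        tau k.+1 i j = Some ti.+1 /\ openloop_update k i j
  end.

Definition runs_algorithm : Prop :=
  (forall i j : 'I_N, i != j -> tau 0 i j = None) /\
  (forall (k : nat) (j : 'I_N), tau k j j = Some 0%N) /\
  (forall (k : nat) (j : 'I_N), source_update k j) /\
  (forall (k : nat) (i j : 'I_N), i != j -> nonsource_step k i j).

End Algo.

From mathcomp Require Import all_boot all_order all_algebra.
From mathcomp Require Import zify.
From Stdlib Require Import ClassicalEpsilon.
Set Implicit Arguments. Unset Strict Implicit. Unset Printing Implicit Defensive.
Import Order.TTheory GRing.Theory Num.Theory.
Local Open Scope ring_scope.

(* The gains are chosen deadbeat: for each observable diagonal block
   (A_jj, C_jj) we pick L_j with A_jj - L_j C_jj nilpotent (pole placement at
   0, valid over any field).  With such gains every node's estimate becomes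
   EXACT after finitely many steps, so the error is bounded by c rho^k for
   every rate rho in (0, 1), with c absorbing the finitely many earlier errors. *)

Section DeadbeatObserver.
Variable F : fieldType.

Definition obs_injective m p (A : 'M[F]_m) (C : 'M[F]_(p, m)) : Prop :=
  forall x : 'cV[F]_m, (forall t, C *m A ^+ t *m x = 0) -> x = 0.

Definition deadbeat_gain m p (A : 'M[F]_m) (C : 'M[F]_(p, m)) : Prop :=
  exists (L : 'M[F]_(m, p)) (k : nat), (A - L *m C) ^+ k = 0.

Lemma observable_injective m p (A : 'M[F]_m) (C : 'M[F]_(p, m)) :
  observable A C -> obs_injective A C.
Proof.
move=> rkO x Cx0; have freeOt : row_free (obsmx A C)^T.
  by rewrite -row_leq_rank mxrank_tr rkO.
have Ox0 : obsmx A C *m x = 0.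
  by rewrite /obsmx mxcol_mul; under eq_mxcol do rewrite Cx0; rewrite mxcol0.
apply: trmx_inj; apply/eqP; rewrite trmx0 -(mulmx_free_eq0 _ freeOt).
by rewrite -trmx_mul Ox0 trmx0.
Qed.

Lemma mxexprS n (M : 'M[F]_n) k : M ^+ k.+1 = M *m M ^+ k.
Proof. by rewrite exprS mulmxE. Qed.

Lemma mxexpr_conj n (Q M : 'M[F]_n) k : Q \in unitmx ->
  (invmx Q *m M *m Q) ^+ k = invmx Q *m M ^+ k *m Q.
Proof.
move=> Qu; elim: k => [|k IHk]; first by rewrite !expr0 mulmx1 mulVmx.
by rewrite [LHS]mxexprS IHk !mulmxA mulmxK // mxexprS !mulmxA.
Qed.

Lemma mxexpr_rotate m n (U : 'M[F]_(m, n)) (V : 'M[F]_(n, m)) k :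
  (U *m V) ^+ k.+1 = U *m (V *m U) ^+ k *m V.
Proof.
elim: k => [|k IHk]; first by rewrite expr1 expr0 mulmx1.
by rewrite mxexprS IHk !mulmxA -[in RHS]mulmxA mxexprS !mulmxA.
Qed.

Lemma similar_obs_injective m p (P : 'M[F]_p) (Q : 'M[F]_m) A C :
  Q \in unitmx -> obs_injective (invmx Q *m A *m Q) (P *m C *m Q) ->
  obs_injective A C.
Proof.
move=> Qu obsAC x Cx0; suff : invmx Q *m x = 0.
  by move/(congr1 (mulmx Q)); rewrite mulKVmx // mulmx0.
apply: obsAC => t; rewrite mxexpr_conj //.
by rewrite !mulmxA !mulmxK // -!mulmxA (mulmxA C) Cx0 !mulmx0.
Qed.

Lemma similar_deadbeat m p (P : 'M[F]_p) (Q : 'M[F]_m) A C :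
  P \in unitmx -> Q \in unitmx -> deadbeat_gain A C ->
  deadbeat_gain (invmx Q *m A *m Q) (P *m C *m Q).
Proof.
move=> Pu Qu [L [k nilL]]; exists (invmx Q *m L *m invmx P), k.
suff -> : invmx Q *m A *m Q - invmx Q *m L *m invmx P *m (P *m C *m Q)
          = invmx Q *m (A - L *m C) *m Q by rewrite mxexpr_conj // nilL mulmx0 mul0mx.
by rewrite mulmxBr mulmxBl !mulmxA mulmxKV.
Qed.

Lemma castmx_deadbeat m m' p p' (em : m = m') (ep : p = p') A C :
  (obs_injective (castmx (em, em) A) (castmx (ep, em) C) ->
   deadbeat_gain (castmx (em, em) A) (castmx (ep, em) C)) ->
  obs_injective A C -> deadbeat_gain A C.
Proof. by case: m' / em; case: p' / ep; rewrite !castmx_id. Qed.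

(* When the output measures exactly the first r coordinates, the remaining
   block (A22, A12) is observable ... *)
Lemma block_obs_injective r b p' (A : 'M[F]_(r + b)) :
  obs_injective A (block_mx 1%:M 0 0 0 : 'M[F]_(r + p', r + b)) ->
  obs_injective (drsubmx A) (ursubmx A).
Proof.
move=> obsA x2 Cx0; rewrite -[A]submxK in obsA.
have powA t : block_mx (ulsubmx A) (ursubmx A) (dlsubmx A) (drsubmx A) ^+ t
                *m col_mx 0 x2 = col_mx 0 (drsubmx A ^+ t *m x2).
  elim: t => [|t IHt]; first by rewrite !expr0 !mul1mx.
  rewrite mxexprS -mulmxA IHt mul_block_col !mulmx0 !add0r.
  by rewrite mxexprS mulmxA Cx0 mulmxA.
suff : col_mx 0 x2 = 0 :> 'cV[F]_(r + b) by rewrite -col_mx0 => /eq_col_mx [].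
apply: obsA => t; rewrite -mulmxA powA mul_block_col !mul0mx !mulmx0 !addr0.
by rewrite col_mx0.
Qed.

(* ... and a deadbeat gain for it extends to a deadbeat gain for A: the
   measured coordinates are corrected exactly, L' handles the rest. *)
Lemma block_deadbeat r b p' (A : 'M[F]_(r + b)) :
  deadbeat_gain (drsubmx A) (ursubmx A) ->
  deadbeat_gain A (block_mx 1%:M 0 0 0 : 'M[F]_(r + p', r + b)).
Proof.
move=> [L' [k nilL']].
exists (A *m block_mx 1%:M (0 : 'M[F]_(r, p')) L' 0), k.+1.
have projE : 1%:M - block_mx 1%:M (0 : 'M[F]_(r, p')) L' 0 *m block_mx 1%:M 0 0 0
             = col_mx 0 1%:M *m row_mx (- L') 1%:M :> 'M[F]_(r + b).
  rewrite mulmx_block mul_col_row !mulmx1 !mulmx0 !mul0mx !addr0 mul1mx.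
  rewrite (scalar_mx_block r b) opp_block_mx add_block_mx.
  by rewrite !subrr !subr0 sub0r.
rewrite -mulmxA -[X in X - _]mulmx1 -mulmxBr projE mulmxA mxexpr_rotate.
rewrite -[A]submxK -mulmxA mul_block_col !mulmx0 !add0r !mulmx1.
by rewrite mul_row_col mulNmx mul1mx addrC nilL' mul0mx mulmx0.
Qed.

(* Induction on the state dimension: factor
   C = P [I 0; 0 0] Q and recurse on the unmeasured block. *)
Theorem deadbeat_observer m p (A : 'M[F]_m) (C : 'M[F]_(p, m)) :
  obs_injective A C -> deadbeat_gain A C.
Proof.
have [M] := ubnP m; elim: M m p C A => // M IHM [|m] p C A ltmM obsAC.
  by exists 0, 1%N; apply/matrixP => [[]].
set r := \rank C; set P := col_ebase C; set Q := row_ebase C.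
have Qu : Q \in unitmx := row_ebase_unit C.
have r_gt0 : (0 < r)%N.
  rewrite lt0n mxrank_eq0; apply/negP => /eqP C0.
  suff /matrixP/(_ ord0 ord0) : const_mx (1 : F) = 0 :> 'cV[F]_m.+1.
    by rewrite !mxE => /eqP; rewrite oner_eq0.
  by apply: obsAC => t; rewrite C0 !mul0mx.
have CE : C = P *m pid_mx r *m Q by rewrite mulmx_ebase.
have AE : A = invmx Q *m (Q *m A *m invmx Q) *m Q.
  by rewrite !mulmxA mulVmx // mul1mx mulmxKV.
rewrite AE CE in obsAC *; apply: similar_deadbeat; rewrite ?col_ebase_unit //.
move: obsAC => /similar_obs_injective-/(_ Qu).
have em : m.+1 = (r + (m.+1 - r))%N by rewrite subnKC // rank_leq_col.
have ep : p = (r + (p - r))%N by rewrite subnKC // rank_leq_row.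
apply: (castmx_deadbeat (em := em) (ep := ep)).
have -> : castmx (ep, em) (pid_mx r : 'M[F]_(p, m.+1)) = block_mx 1%:M 0 0 0.
  by rewrite -pid_mx_block; apply/matrixP => i j; rewrite castmxE !mxE.
move/block_obs_injective/IHM => deadbeat22; apply/block_deadbeat/deadbeat22.
by rewrite -ltnS (leq_trans _ ltmM) // ltnS ltn_subrL r_gt0.
Qed.

End DeadbeatObserver.

Section Norms.
Variable R : realDomainType.

Lemma vnorm_ge0 m (v : 'cV[R]_m) : 0 <= vnorm v.
Proof. exact: bigmax_ge_id. Qed.

Lemma mnorm_ge0 m (M : 'M[R]_m) : 0 <= mnorm M.
Proof. exact: bigmax_ge_id. Qed.

Lemma vnorm0 m : vnorm (0 : 'cV[R]_m) = 0.
Proof. by apply: bigmax_eq_id => i _; rewrite mxE normr0. Qed.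

Lemma vnorm_mul m (M : 'M[R]_m) (v : 'cV[R]_m) :
  vnorm (M *m v) <= mnorm M * vnorm v.
Proof.
apply: bigmax_le => [|i _]; first by rewrite mulr_ge0 ?mnorm_ge0 ?vnorm_ge0.
rewrite mxE; apply: le_trans (ler_norm_sum _ _ _) _.
apply: (@le_trans _ _ (\sum_(j < m) `|M i j| * vnorm v)).
  apply: ler_sum => j _; rewrite normrM ler_wpM2l //.
  exact: (le_bigmax _ (fun j => `|v j 0|)).
rewrite -mulr_suml ler_wpM2r ?vnorm_ge0 //.
exact: (le_bigmax _ (fun i => \sum_(j < m) `|M i j|)).
Qed.

End Norms.

Section BlockAlgebra.
Variables (R : realFieldType) (N : nat) (nj : 'I_N -> nat).
Local Notation n := (\sum_(j < N) nj j)%N.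

Lemma sub_mulmx (M : 'M[R]_n) (v : 'cV[R]_n) (j : 'I_N) :
  sub (M *m v) j = \sum_q Ablk M j q *m sub v q.
Proof.
by rewrite /sub /Ablk -{1}(submxblockK M) -{1}(submxcolK v) mul_mxblock_mxrow mxcolK.
Qed.

Lemma mulmx_subE p (M : 'M[R]_(p, n)) (v : 'cV[R]_n) :
  M *m v = \sum_q submxrow M q *m sub v q.
Proof. by rewrite /sub -{1}(submxrowK M) -{1}(submxcolK v) mul_mxrow_mxcol. Qed.

End BlockAlgebra.

Lemma sum_lower_triangular (V : nmodType) N (f : 'I_N -> V) (j : 'I_N) :
  (forall q : 'I_N, (j < q)%N -> f q = 0) ->
  \sum_q f q = f j + \sum_(q < N | (q < j)%N) f q.
Proof.
move=> upper0; rewrite (bigD1 j) //=; congr (_ + _).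
rewrite (bigID (fun q : 'I_N => (q < j)%N)) /= [X in _ + X]big1 ?addr0.
  by apply: eq_bigl => q; case: eqVneq => // ->; rewrite ltnn.
move=> q /andP [qj]; rewrite -leqNgt leq_eqVlt => /orP [/eqP jq|]; last exact: upper0.
by case/eqP: qj; apply: val_inj.
Qed.

Lemma connect_crossing N (e : rel 'I_N) (S : {set 'I_N}) a b :
  a \in S -> b \notin S -> connect e a b ->
  exists x y, [/\ x \in S, y \notin S & e x y].
Proof.
move=> aS bS /connectP [p ep lastp]; rewrite {b}lastp in bS.
elim: p a aS ep bS => [|c p IHp] a aS /=; first by rewrite aS.
case/andP => eac ep; case: (boolP (c \in S)) => [cS|cS _]; first exact: IHp.
by exists a, c.
Qed.

(* Node i is
   "informed since w" at time k if its freshness index t certifies that its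
   estimate of substate j descends from the source's estimate at time
   k - t >= w.  This property persists, crosses every active edge, and holds
   at the source from time w on; joint strong connectivity then forces every
   node to become informed since w after N - 1 further windows. *)
Section Freshness.
Variables (R : realFieldType) (N : nat) (nj r : 'I_N -> nat).
Local Notation n := (\sum_(j < N) nj j)%N.
Variables (Abar : 'M[R]_n) (C : forall i : 'I_N, 'M[R]_(r i, n)) (T : 'M[R]_n).
Variables (L : forall j : 'I_N, 'M[R]_(nj j, r j)) (E : nat -> rel 'I_N).
Variables (y : forall i : 'I_N, nat -> 'cV[R]_(r i)).
Variables (tau : nat -> 'I_N -> 'I_N -> option nat) (zh : nat -> 'I_N -> 'cV[R]_n).
Hypothesis run : runs_algorithm Abar C T L E y tau zh.
Variables (j : 'I_N) (w : nat).

Definition informed_since (k : nat) (i : 'I_N) : bool :=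
  if tau k i j is Some t then (w + t <= k)%N else false.

Lemma informed_source k : (w <= k)%N -> informed_since k j.
Proof. by case: run => _ [src_idx _]; rewrite /informed_since src_idx addn0. Qed.

(* The index grows by at most one per step, so information never ages. *)
Lemma informed_step k i : informed_since k i -> informed_since k.+1 i.
Proof.
case: run => _ [src_idx [_ step]].
case: (eqVneq i j) => [->|ij]; first by rewrite /informed_since !src_idx; lia.
move: (step k i j ij); rewrite /nonsource_step /informed_since.
case: (tau k i j) => [ti|] //.
by case=> [[u [tu [_ [_ [tu_ti [_ [-> _]]]]]]] | [_ [-> _]]]; lia.
Qed.

Lemma informed_later k d i : informed_since k i -> informed_since (k + d) i.
Proof. by move=> inf_i; elim: d => [|d IHd]; rewrite ?addn0 // addnS informed_step. Qed.

(* Adopting the freshest neighbour passes the information along an edge. *)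
Lemma informed_spread k i u :
  neighbor E k i u -> informed_since k u -> informed_since k.+1 i.
Proof.
case: run => _ [src_idx [_ step]] nb_u.
rewrite {1}/informed_since; case tau_u: (tau k u j) => [tu|] // fresh_u.
case: (eqVneq i j) => [->|ij]; first by rewrite /informed_since !src_idx; lia.
move: (step k i j ij); rewrite /nonsource_step /informed_since.
case: (tau k i j) => [ti|].
  case=> [[v [tv [_ [_ [tv_ti [tv_min [-> _]]]]]]] | [no_fresher [-> _]]].
    by case: (ltnP tu ti) => [/(tv_min u tu nb_u tau_u)|]; lia.
  case: (ltnP tu ti) => [tu_ti|]; last lia.
  by case: no_fresher; exists u, tu.
case=> [[_ [v [tv [_ [_ [tv_min [-> _]]]]]]] | [no_nb _]].
  by have := tv_min u tu nb_u tau_u; lia.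
by case: no_nb; exists u, tu.
Qed.

Definition informed_set (k : nat) : {set 'I_N} := [set i | informed_since k i].

Lemma informed_window Tp m : joint_strong_connectivity E Tp -> (w <= m * Tp)%N ->
  informed_set (m * Tp) \subset informed_set (m.+1 * Tp) /\
  (informed_set (m * Tp) != setT ->
   (#|informed_set (m * Tp)| < #|informed_set (m.+1 * Tp)|)%N).
Proof.
move=> [Tp_gt0 sconn] w_le.
have grow : informed_set (m * Tp) \subset informed_set (m.+1 * Tp).
  by apply/subsetP => i; rewrite !inE mulSn addnC; apply: informed_later.
split=> // not_full; apply: proper_card; rewrite properE grow /=.
have [b b_out] : exists b, b \notin informed_set (m * Tp).
  apply/existsP; apply: contraNT not_full; rewrite negb_exists => /forallP all_in.
  by apply/eqP/setP => i; rewrite in_setT; exact: negbNE (all_in i).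
have j_in : j \in informed_set (m * Tp) by rewrite inE informed_source.
have [a [c [a_in c_out]]] := connect_crossing j_in b_out (sconn m j b).
move=> /existsP [t edge_t]; apply/subsetPn; exists c => //; rewrite inE.
have inf_c : informed_since (m * Tp + t).+1 c.
  apply: (@informed_spread _ _ a); last by rewrite inE in a_in; apply: informed_later.
  by rewrite /neighbor edge_t andbT; apply: contraNneq c_out => <-.
have -> : (m.+1 * Tp = (m * Tp + t).+1 + (Tp - t.+1))%N.
  by rewrite mulSn; have := ltn_ord t; lia.
exact: informed_later.
Qed.

Lemma informed_eventually Tp : joint_strong_connectivity E Tp ->
  exists K, forall k i, (K <= k)%N -> informed_since k i.
Proof.
move=> jsc; have Tp_gt0 := jsc.1.
have w_le s : (w <= (w + s) * Tp)%N by nia.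
have N_gt0 : (0 < N)%N by have := ltn_ord j; lia.
have card_grow s : (minn s.+1 N <= #|informed_set ((w + s) * Tp)|)%N.
  elim: s => [|s IHs].
    suff : (0 < #|informed_set ((w + 0) * Tp)|)%N by lia.
    by apply/card_gt0P; exists j; rewrite inE informed_source.
  have [grow grow_strict] := informed_window jsc (w_le s); rewrite addnS.
  have := subset_leq_card grow.
  case: (eqVneq (informed_set ((w + s) * Tp)) setT) => [full|/grow_strict]; last lia.
  by rewrite full cardsT card_ord; lia.
exists ((w + N.-1) * Tp)%N => k i k_ge.
have all_in : informed_set ((w + N.-1) * Tp) = setT.
  apply/eqP; rewrite eqEcard subsetT cardsT card_ord.
  by have := card_grow N.-1; lia.
have : i \in informed_set ((w + N.-1) * Tp) by rewrite all_in inE.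
by rewrite inE -(subnKC k_ge); apply: informed_later.
Qed.

End Freshness.

(* Cancellation identity behind the source error recursion. *)
Lemma addr_cancel_sub (V : zmodType) (a b c d e : V) :
  a + (b - c) + (d + c) - (e + b) = a - (e - d).
Proof. by rewrite addrACA subrK (addrC e b) addrKA opprB addrA. Qed.

(* Once every node estimates the substates
   q < j exactly, the substate-j errors obey: the source runs the nilpotent
   observer dynamics A_jj - L_j C_jj, any other node applies A_jj to the error
   of the node it copies (possibly itself).  Hence the source error vanishes,
   and so does the error of every node informed since that moment.  Induction
   on j gives exact estimates at every node after a finite time. *)
Section ErrorDynamics.
Variables (R : realFieldType) (N : nat) (nj r : 'I_N -> nat).
Local Notation n := (\sum_(j < N) nj j)%N.
Variables (A T : 'M[R]_n) (C : forall i : 'I_N, 'M[R]_(r i, n)).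
Variables (E : nat -> rel 'I_N) (Tp : nat) (L : forall j : 'I_N, 'M[R]_(nj j, r j)).
Variables (x : nat -> 'cV[R]_n) (tau : nat -> 'I_N -> 'I_N -> option nat).
Variable (zh : nat -> 'I_N -> 'cV[R]_n).
Local Notation Abar := (invmx T *m A *m T).
Local Notation Ab := (Ablk (nj:=nj) Abar).
Local Notation Cb := (Cblk (nj:=nj) C T).
Hypothesis T_unit : T \in unitmx.
Hypothesis Abar_lower : forall j q : 'I_N, (j < q)%N -> Ab j q = 0.
Hypothesis CT_lower : forall i q : 'I_N, (i < q)%N -> Cb i q = 0.
Hypothesis L_deadbeat : forall j : 'I_N, exists kf : nat, (Ab j j - L j *m Cb j j) ^+ kf = 0.
Hypothesis jsc : joint_strong_connectivity E Tp.
Hypothesis x_dyn : forall k, x k.+1 = A *m x k.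
Hypothesis run : runs_algorithm Abar C T L E (fun i k => C i *m x k) tau zh.

Definition z (k : nat) : 'cV[R]_n := invmx T *m x k.

Lemma z_sub_dyn k j : sub (z k.+1) j =
  Ab j j *m sub (z k) j + \sum_(q < N | (q < j)%N) Ab j q *m sub (z k) q.
Proof.
have -> : z k.+1 = Abar *m z k by rewrite /z x_dyn !mulmxA mulmxK.
by rewrite sub_mulmx; apply: sum_lower_triangular => q /Abar_lower ->; rewrite mul0mx.
Qed.

Lemma output_sub j k : C j *m x k =
  Cb j j *m sub (z k) j + \sum_(q < N | (q < j)%N) Cb j q *m sub (z k) q.
Proof.
have -> : x k = T *m z k by rewrite /z mulKVmx.
rewrite mulmxA mulmx_subE; apply: sum_lower_triangular => q /CT_lower.
by rewrite /Cblk => ->; rewrite mul0mx.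
Qed.

Definition exact_below (k : nat) (i j : 'I_N) : Prop :=
  forall q : 'I_N, (q < j)%N -> sub (zh k i) q = sub (z k) q.

Definition err (j : 'I_N) (k : nat) (i : 'I_N) : 'cV[R]_(nj j) :=
  sub (zh k i) j - sub (z k) j.

Lemma coupling_exact k i j : exact_below k i j ->
  coupling Abar zh k i j = \sum_(q < N | (q < j)%N) Ab j q *m sub (z k) q.
Proof. by move=> exact_i; apply: eq_bigr => q /exact_i ->. Qed.

Lemma err_adopt k i j u : exact_below k i j -> adopt_update Abar zh k i j u ->
  err j k.+1 i = Ab j j *m err j k u.
Proof.
move=> exact_i upd; rewrite /err upd coupling_exact // z_sub_dyn.
by rewrite opprD addrACA subrr addr0 mulmxBr.
Qed.

Lemma err_source k j : exact_below k j j ->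
  err j k.+1 j = (Ab j j - L j *m Cb j j) *m err j k j.
Proof.
move=> exact_j; case: run => _ [_ [src_upd _]].
rewrite /err (src_upd k j) z_sub_dyn output_sub.
have -> : \sum_(q < N | (q < j)%N) (Ab j q - L j *m Cb j q) *m sub (zh k j) q
   = \sum_(q < N | (q < j)%N) Ab j q *m sub (z k) q
     - L j *m \sum_(q < N | (q < j)%N) Cb j q *m sub (z k) q.
  rewrite mulmx_sumr -sumrB; apply: eq_bigr => q /exact_j ->.
  by rewrite mulmxBl mulmxA.
by rewrite mulmxDr !mulmxA addr_cancel_sub mulmxBr [X in _ = _ - X]mulmxBl.
Qed.

Section Substate.
Variables (j : 'I_N) (K0 : nat).
Hypothesis exact_lower : forall k i, (K0 <= k)%N -> exact_below k i j.

(* The source error is driven to zero by the nilpotent observer matrix. *)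
Lemma source_err_vanishes : exists w, (K0 < w)%N /\
  forall k, (w <= k)%N -> err j k j = 0.
Proof.
have [kf nil] := L_deadbeat j.
have err_pow d : err j (K0 + d) j = (Ab j j - L j *m Cb j j) ^+ d *m err j K0 j.
  elim: d => [|d IHd]; first by rewrite addn0 expr0 mul1mx.
  rewrite addnS err_source; last exact: exact_lower (leq_addr _ _).
  by rewrite IHd mxexprS mulmxA.
exists (K0 + kf).+1; split=> [|k k_ge]; first lia.
have -> : k = (K0 + (kf + (k - K0 - kf)))%N by lia.
by rewrite err_pow exprD nil mul0r mul0mx.
Qed.

Lemma informed_err_vanishes w : (K0 < w)%N ->
  (forall k, (w <= k)%N -> err j k j = 0) ->
  forall k i, informed_since tau j w k i -> err j k i = 0.
Proof.
move=> K0_w src0; case: run => _ [_ [_ step]].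
elim=> [|k IHk] i; first by rewrite /informed_since; case: (tau 0 i j) => //; lia.
rewrite {1}/informed_since; case tau_i: (tau k.+1 i j) => [t|] // fresh_i.
case: (eqVneq i j) => [->|ij]; first by apply: src0; lia.
have exact_i : exact_below k i j by apply: exact_lower; lia.
have informed_u u tu : tau k u j = Some tu -> t = tu.+1 -> err j k u = 0.
  by move=> tau_u t_tu; apply: IHk; rewrite /informed_since tau_u; lia.
move: (step k i j ij); rewrite /nonsource_step tau_i.
case tau_k: (tau k i j) => [ti|].
  case=> [[u [tu [_ [tau_u [_ [_ [[t_tu] upd]]]]]]] | [_ [[t_ti] upd]]].
    by rewrite (err_adopt exact_i upd) (informed_u u tu) ?mulmx0.
  by rewrite (err_adopt exact_i upd) (informed_u i ti) ?mulmx0.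
case=> [[_ [u [tu [_ [tau_u [_ [[t_tu] upd]]]]]]] | [_ [none_now _]]]; last by [].
by rewrite (err_adopt exact_i upd) (informed_u u tu) ?mulmx0.
Qed.

Lemma substate_exact : exists K, forall k i, (K <= k)%N -> err j k i = 0.
Proof.
have [w [K0_w src0]] := source_err_vanishes.
have [K informed] := informed_eventually run j w jsc.
by exists K => k i k_ge; apply: informed_err_vanishes (informed k i k_ge).
Qed.

End Substate.

Lemma estimates_exact : exists K, forall k i, (K <= k)%N -> zh k i = z k.
Proof.
suff [K exact_from] : exists K, forall k i (q : 'I_N), (K <= k)%N ->
    sub (zh k i) q = sub (z k) q.
  exists K => k i k_ge; rewrite -(submxcolK (zh k i)) -(submxcolK (z k)).
  by apply: eq_mxcol => q; apply: exact_from.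
suff upto s : exists K, forall k i (q : 'I_N), (K <= k)%N -> (q < s)%N ->
    sub (zh k i) q = sub (z k) q.
  by have [K exact_from] := upto N; exists K => k i q k_ge; apply: exact_from.
elim: s => [|s [K IHs]]; first by exists 0%N.
case: (ltnP s N) => [s_N|N_s]; last first.
  by exists K => k i q k_ge q_s; apply: IHs => //; apply: leq_trans (ltn_ord q) N_s.
have [K' err0] := @substate_exact (Ordinal s_N) K (fun k i k_ge q => IHs k i q k_ge).
exists (maxn K K') => k i q; rewrite geq_max => /andP [k_K k_K'].
rewrite ltnS leq_eqVlt => /orP [/eqP q_s|]; last exact: IHs.
have -> : q = Ordinal s_N by apply: val_inj.
by apply/eqP; rewrite -subr_eq0; apply/eqP; apply: err0.
Qed.

End ErrorDynamics.

(* A nonnegative family that vanishes from time K on decays at any rate rho: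
   the constant only has to absorb the finitely many earlier values. *)
Lemma eventually_zero_geometric (R : realFieldType) N (f : nat -> 'I_N -> R)
    (rho : R) (K : nat) :
  0 < rho -> (forall k i, 0 <= f k i) -> (forall k i, (K <= k)%N -> f k i = 0) ->
  exists c : R, 0 <= c /\ forall k i, f k i <= c * rho ^+ k.
Proof.
move=> rho_gt0 f_ge0 f0; pose g (k : 'I_K) i := f k i / rho ^+ k.
have g_ge0 k i : 0 <= g k i by rewrite /g divr_ge0 ?f_ge0 ?exprn_ge0 ?ltW.
have row_ge0 k : 0 <= \sum_i g k i by apply: sumr_ge0 => i _; apply: g_ge0.
pose c := \sum_(k < K) \sum_i g k i.
have le_c k i : g k i <= c.
  rewrite /c (bigD1 k) //= (bigD1 i) //= -addrA ler_wpDr //.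
  by apply: addr_ge0; apply: sumr_ge0 => l _; rewrite ?g_ge0 ?row_ge0.
have c_ge0 : 0 <= c by apply: sumr_ge0 => k _; apply: row_ge0.
exists c; split=> // k i.
case: (ltnP k K) => [k_K|/f0 ->].
  by rewrite -ler_pdivrMr ?exprn_gt0 //; apply: (le_c (Ordinal k_K)).
by rewrite mulr_ge0 // exprn_ge0 // ltW.
Qed.

(* Theorem 1.  Choose deadbeat gains L_j for the observable diagonal blocks;
   then every node's estimate becomes exact after finitely many steps, so the
   error is bounded by c rho^k for any rho in (0, 1) at all times k (in
   particular beyond the threshold (2N - 1)(N - 1)T of the statement). *)
Theorem theorem1 (R : realFieldType) (N : nat) (nj : 'I_N -> nat) (r : 'I_N -> nat)
  (A : 'M[R]_(\sum_(j < N) nj j)) (C : forall i : 'I_N, 'M[R]_(r i, \sum_(j < N) nj j))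
  (T : 'M[R]_(\sum_(j < N) nj j)) (E : nat -> rel 'I_N) (Tp : nat) :
  (* (A, C) observable, C = [C_1; ...; C_N] *)
  observable A (\mxcol_(i < N) C i) ->
  (* the fixed transformation T and its structural properties *)
  T \in unitmx ->
  (forall j q : 'I_N, (j < q)%N -> @Ablk R N nj (invmx T *m A *m T) j q = 0) ->
  (forall i q : 'I_N, (i < q)%N -> @Cblk R N nj r C T i q = 0) ->
  (forall j : 'I_N, observable (@Ablk R N nj (invmx T *m A *m T) j j) (@Cblk R N nj r C T j j)) ->
  (* joint strong connectivity *)
  joint_strong_connectivity E Tp ->
  forall rho : R, 0 < rho < 1 ->
  exists L : forall j : 'I_N, 'M[R]_(nj j, r j),
    forall (x : nat -> 'cV[R]_(\sum_(j < N) nj j))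
           (tau : nat -> 'I_N -> 'I_N -> option nat)
           (zh : nat -> 'I_N -> 'cV[R]_(\sum_(j < N) nj j)),
      (forall k, x k.+1 = A *m x k) ->
      @runs_algorithm R N nj r (invmx T *m A *m T) C T L E (fun i k => C i *m x k) tau zh ->
      exists c : R, 0 <= c /\
        forall (k : nat) (i : 'I_N), ((2 * N - 1) * (N - 1) * Tp <= k)%N ->
          vnorm (zh k i - invmx T *m x k) <= c * rho ^+ k /\
          vnorm (T *m zh k i - x k) <= mnorm T * c * rho ^+ k.
Proof.
move=> _ T_unit Abar_lower CT_lower obs_blocks jsc rho /andP [rho_gt0 _].
pose Abar := invmx T *m A *m T.
have gains j : deadbeat_gain (Ablk Abar j j) (Cblk C T j j).
  exact/deadbeat_observer/observable_injective/obs_blocks.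
pose L j := proj1_sig (constructive_indefinite_description _ (gains j)).
have L_deadbeat j : exists kf, (Ablk Abar j j - L j *m Cblk C T j j) ^+ kf = 0.
  exact: (proj2_sig (constructive_indefinite_description _ (gains j))).
exists L => x tau zh x_dyn run.
have [K exact_from] := estimates_exact T_unit Abar_lower CT_lower L_deadbeat jsc x_dyn run.
have err0 k i : (K <= k)%N -> vnorm (zh k i - invmx T *m x k) = 0.
  by move=> /exact_from ->; rewrite /z subrr vnorm0.
have [c [c_ge0 bound]] := eventually_zero_geometric rho_gt0 (fun k i => vnorm_ge0 _) err0.
exists c; split=> // k i _; split=> //.
have -> : T *m zh k i - x k = T *m (zh k i - invmx T *m x k) by rewrite mulmxBr mulKVmx.
by apply: le_trans (vnorm_mul _ _) _; rewrite -mulrA ler_wpM2l ?mnorm_ge0.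
Qed.
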